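(* Let $\alpha\colon\Gamma\curvearrowright X$ be an action of a countable group on a compact, Hausdorff, $0$-dimensional space, and assume there is no $\alpha$-invariant Radon probability measure on $X$. Then $\alpha$ has the dynamical comparison property if and only if $\alpha$ is minimal and $a\le b$ for all nonzero $a,b\in T(\alpha)$.
   Context: Clopen type semigroup: let $Y = X\times\mathbb N$, and let $\tilde\Gamma=\Gamma\times\mathfrak S$ ($\mathfrak S$ the permutation group of $\mathbb N$) act on $Y$ by $(\gamma,\sigma)(x,n)=(\alpha(\gamma)x,\sigma(n))$. A clopen $A\subseteq Y$ is bounded if $A\cap(X\times\{n\})=\emptyset$ for all large $n$. Bounded clopen $A,B$ are equidecomposable if there are clopen $A_1,\dots,A_n$ and $\tilde\gamma_i\in\tilde\Gamma$ with $A=\bigsqcup_i A_i$, $B=\bigsqcup_i\tilde\gamma_iA_i$. $T(\alpha)$ is the set of classes $[A]$, with $[A]+[B]=[A'\sqcup B']$ for disjoint representatives; $0=[\emptyset]$. $a\le b$ iff $b=a+c$ for some $c$. For clopen $A\subseteq X$, $[A]$ denotes $[A\times\{0\}]$. The action $\alpha$ has dynamical comparison if for all nonempty clopen $A,B\subseteq X$ such that $\mu(A)<\mu(B)$ for every $\alpha$-invariant Radon probability measure $\mu$ on $X$, one has $[A]\le[B]$. The action is minimal if every orbit is dense. *)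

From HB Require Import structures.
From mathcomp Require Import all_boot all_order all_algebra.
From mathcomp Require Import all_classical all_reals all_analysis.
From mathcomp Require Import Rstruct.
Set Implicit Arguments.
Unset Strict Implicit.
Unset Printing Implicit Defensive.
Import Order.TTheory GRing.Theory Num.Theory.
Local Open Scope classical_set_scope.

Section Defs.
Variables (G : groupType) (X : topologicalType) (alpha : G -> X -> X).

Definition zero_dim : Prop :=
  forall (U : set X) (x : X), open U -> U x ->
    exists V : set X, [/\ clopen V, V x & V `<=` U].

Definition is_continuous_action : Prop :=
  [/\ forall g, continuous (alpha g),
      alpha 1%g = id
    & forall g h, alpha (g * h)%g = alpha g \o alpha h].

Definition borel : set (set X) := <<s @open X >>.

Definition radon_probability (mu : set X -> \bar Rdefinitions.R) : Prop :=
  [/\ mu set0 = 0%E /\ (forall E, borel E -> (0 <= mu E)%E),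
      (forall F : nat -> set X, (forall i, borel (F i)) -> trivIset setT F ->
         (\sum_(0 <= i < n) mu (F i))%E @[n --> \oo] --> mu (\bigcup_n F n)),
      mu setT = 1%E,
      (forall E, borel E ->
         mu E = ereal_inf [set mu U | U in [set U | open U /\ E `<=` U]])
    & (forall U, open U ->
         mu U = ereal_sup [set mu K | K in [set K | compact K /\ K `<=` U]])].

Definition invariant_measure (mu : set X -> \bar Rdefinitions.R) : Prop :=
  forall g E, borel E -> mu (alpha g @` E) = mu E.

Definition minimal_action : Prop :=
  forall x : X, closure [set alpha g x | g in [set: G]] = [set: X].

(* The space Y = X x N (N discrete) and the action of G x Sym(N) on it *)
Definition actY (g : G) (s : nat -> nat) (p : X * nat) : X * nat :=
  (alpha g p.1, s p.2).

Definition bounded_set (A : set (X * nat)) : Prop :=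
  exists N : nat, forall x n, A (x, n) -> (n < N)%N.

Definition bclopen (A : set (X * nat)) : Prop := clopen A /\ bounded_set A.

Definition equidec (A B : set (X * nat)) : Prop :=
  exists (n : nat) (P : 'I_n -> set (X * nat)) (g : 'I_n -> G)
         (s : 'I_n -> nat -> nat),
    [/\ forall i, clopen (P i),
        forall i, bijective (s i),
        A = \bigcup_i P i /\ trivIset setT P
      & B = \bigcup_i (actY (g i) (s i) @` P i) /\
        trivIset setT (fun i => actY (g i) (s i) @` P i)].

(* [A] <= [B] in T(alpha): [B] = [A] + c for some c, i.e. there are disjoint
   bounded clopen A' ~ A and C' (representing c) with A' u C' ~ B *)
Definition T_le (A B : set (X * nat)) : Prop :=
  exists A' C' : set (X * nat),
    [/\ bclopen A', bclopen C', A' `&` C' = set0,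
        equidec A A' & equidec (A' `|` C') B].

(* the class [A] of a clopen A in X is [A x {0}] *)
Definition at0 (A : set X) : set (X * nat) := A `*` [set 0%N].

Definition dynamical_comparison : Prop :=
  forall A B : set X, clopen A -> clopen B -> A !=set0 -> B !=set0 ->
    (forall mu, radon_probability mu -> invariant_measure mu ->
       (mu A < mu B)%E) ->
    T_le (at0 A) (at0 B).

End Defs.

(* Without invariant measures the hypothesis of dynamical comparison is
   vacuous, so it says [A] <= [B] for all nonempty clopen A, B of X; in
   particular X x {0} embeds piecewise (finitely many clopen pieces, each moved
   by an element of G x Sym(N)) into D x {0} for every nonempty clopen D.
   Following a single point through such an embedding gives minimality.
   X is not a point, since otherwise its Dirac mass would be invariant, so the
   injectivity of the embedding forces every nonempty clopen D to contain two
   points, and then, X being zero-dimensional and Hausdorff, to split into two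
   nonempty clopen halves. Sending the top level of a bounded clopen set into
   one half and, by induction on the height, the lower levels into the other,
   every bounded clopen set embeds into D x {m}, hence into every nonzero
   bounded clopen set, which is [a] <= [b]. The converse is the special case
   of sets at level 0. *)

From mathcomp Require Import all_boot all_order all_algebra.
From mathcomp Require Import all_classical all_reals all_analysis.
From mathcomp Require Import Rstruct.
Set Implicit Arguments.
Unset Strict Implicit.
Unset Printing Implicit Defensive.
Import Order.TTheory.
Local Open Scope classical_set_scope.

Section ProductWithNat.
Variable X : topologicalType.

Lemma continuous_fst : continuous (@fst X nat).
Proof. by move=> p; exact: cvg_fst. Qed.

Lemma continuous_snd : continuous (@snd X nat).
Proof. by move=> p; exact: cvg_snd. Qed.

Lemma clopen_snd_preimage (P : set nat) : clopen (@snd X nat @^-1` P).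
Proof.
apply: preimage_clopen continuous_snd.
by split; [exact: discrete_open | exact: discrete_closed].
Qed.

Lemma clopen_setX1 (S : set X) (k : nat) : clopen S -> clopen (S `*` [set k]).
Proof.
move=> cS; change (clopen (@fst X nat @^-1` S `&` @snd X nat @^-1` [set k])).
exact: clopenI (preimage_clopen cS continuous_fst) (clopen_snd_preimage _).
Qed.

Lemma clopen_slice (B : set (X * nat)) (m : nat) : clopen B -> clopen [set x | B (x, m)].
Proof.
move=> cB; apply: (@preimage_clopen _ _ (fun x => (x, m)) B cB) => x.
exact: (cvg_pair cvg_id (cvg_cst m)).
Qed.

Lemma continuous_map_pair (f : X -> X) (s : nat -> nat) : continuous f ->
  continuous (fun p : X * nat => (f p.1, s p.2)).
Proof.
move=> cf p.
have snd_s : (fun q : X * nat => s q.2) @ p --> s p.2.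
  move=> W /nbhs_singleton Ws.
  have p2_nbhs : nbhs p (@snd X nat @^-1` [set p.2]).
    by apply: continuous_snd; exact: discrete_set1.
  by apply: (filterS _ p2_nbhs) => q /= ->.
have fst_f : (fun q : X * nat => f q.1) @ p --> f p.1.
  by apply: continuous_comp; [exact: continuous_fst | exact: cf].
exact: cvg_pair fst_f snd_s.
Qed.

End ProductWithNat.

Lemma bclopen_at0 (X : topologicalType) (S : set X) : clopen S -> bclopen (at0 S).
Proof. by move=> cS; split; [exact: clopen_setX1 | exists 1%N => x n [_ /= ->]]. Qed.

Lemma zero_dim_separates (X : topologicalType) :
  zero_dim X -> hausdorff_space X -> zero_dimensional X.
Proof.
move=> zd /hausdorff_accessible acc x y /acc [U [oU /set_mem Ux /set_mem nUy]].
by have [V [cV Vx VU]] := zd U x oU Ux; exists V; split => // /VU.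
Qed.

Lemma clopen_split (X : topologicalType) (D : set X) x y :
  zero_dimensional X -> clopen D -> D x -> D y -> x != y ->
  exists E, [/\ clopen E, E `<=` D, E !=set0 & D `\` E !=set0].
Proof.
move=> zdX cD Dx Dy /zdX [V [cV Vx nVy]].
exists (D `&` V); split; [exact: clopenI | exact: subIsetl | by exists x |].
by exists y; split => // -[].
Qed.

Definition swapn (k m n : nat) : nat :=
  if n == k then m else if n == m then k else n.

Lemma swapnK k m : involutive (swapn k m).
Proof.
move=> n; rewrite /swapn.
have [->|nk] := eqVneq n k; first by rewrite eqxx; case: eqVneq => [->|].
have [->|nm] := eqVneq n m; first by rewrite eqxx.
by rewrite (negbTE nk) (negbTE nm).
Qed.

Section Action.
Variables (G : groupType) (X : topologicalType) (alpha : G -> X -> X).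
Hypothesis act : is_continuous_action alpha.

Lemma act_continuous g : continuous (alpha g).
Proof. by case: act. Qed.

Lemma act1 x : alpha 1%g x = x.
Proof. by case: act => _ -> _. Qed.

Lemma actM g h x : alpha (g * h)%g x = alpha g (alpha h x).
Proof. by case: act => _ _ ->. Qed.

Lemma actVK g : cancel (alpha g) (alpha g^-1%g).
Proof. by move=> x; rewrite -actM mulVg act1. Qed.

Lemma actKV g : cancel (alpha g^-1%g) (alpha g).
Proof. by move=> x; rewrite -actM mulgV act1. Qed.

Lemma actY_continuous g s : continuous (actY alpha g s).
Proof. exact: (@continuous_map_pair X (alpha g) s (@act_continuous g)). Qed.

Lemma actY_inj g s : injective s -> injective (actY alpha g s).
Proof. by move=> s_inj [x n] [y m] [/(can_inj (actVK g)) -> /s_inj ->]. Qed.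

Lemma clopen_actY_image g s (P : set (X * nat)) : bijective s -> clopen P ->
  clopen (actY alpha g s @` P).
Proof.
case=> s' ss' s's cP.
have -> : actY alpha g s @` P = actY alpha g^-1%g s' @^-1` P.
  apply/seteqP; split => [_ [[x n] Pxn <-]|[x n] /= Pxn].
    by rewrite /actY /= actVK ss'.
  by exists (alpha g^-1%g x, s' n) => //; rewrite /actY /= actKV s's.
exact: preimage_clopen cP (@actY_continuous _ _).
Qed.

Definition embeds (A B : set (X * nat)) : Prop :=
  exists (I : finType) (c : X * nat -> I) (g : I -> G) (s : I -> nat -> nat),
  [/\ forall i, clopen (A `&` c @^-1` [set i]),
      forall i, bijective (s i),
      forall p q, A p -> A q ->
        actY alpha (g (c p)) (s (c p)) p = actY alpha (g (c q)) (s (c q)) q -> p = q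
    & forall p, A p -> B (actY alpha (g (c p)) (s (c p)) p)].

Lemma embeds_actY g s A : bijective s -> clopen A -> embeds A (actY alpha g s @` A).
Proof.
move=> s_bij cA; exists unit, (fun=> tt), (fun=> g), (fun=> s); split => //.
- by case; rewrite [_ @^-1` _](_ : _ = setT) ?setIT //; apply/seteqP; split => -[].
- by move=> p q _ _ /(actY_inj (bij_inj s_bij)).
Qed.

Lemma embedsSr A B B' : B `<=` B' -> embeds A B -> embeds A B'.
Proof.
move=> BB' [I [c [g [s [cP s_bij inj AB]]]]].
by exists I, c, g, s; split => // p /AB /BB'.
Qed.

Lemma embedsSl A0 A B : A0 `<=` A -> clopen A0 -> embeds A B -> embeds A0 B.
Proof.
move=> A0A cA0 [I [c [g [s [cP s_bij inj AB]]]]].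
exists I, c, g, s; split => //.
- by move=> i; rewrite -(setIidl A0A) -setIA; exact: clopenI.
- by move=> p q /A0A Ap /A0A Aq; exact: inj.
- by move=> p /A0A; exact: AB.
Qed.

Lemma embeds0 B : embeds set0 B.
Proof.
have id_bij : bijective (@id nat) by exists id.
by apply: embedsSr (embeds_actY 1%g id_bij clopen0) => y [].
Qed.

Lemma embeds_swap (S : set X) k m : clopen S ->
  embeds (S `*` [set k]) (S `*` [set m]).
Proof.
move=> cS; have swap_bij : bijective (swapn k m) by exists (swapn k m); exact: swapnK.
apply: embedsSr (embeds_actY 1%g swap_bij (clopen_setX1 k cS)).
by move=> _ [[x n] [/= Sx ->] <-]; rewrite /actY /= act1 /swapn eqxx.
Qed.

Lemma embeds_trans A B C : embeds A B -> embeds B C -> embeds A C.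
Proof.
move=> [I [c [g [s [cP s_bij inj AB]]]]] [J [d [h [t [cQ t_bij inj' BC]]]]].
pose phi i := actY alpha (g i) (s i).
exists (I * J)%type, (fun p => (c p, d (phi (c p) p))),
  (fun ij => h ij.2 * g ij.1)%g, (fun ij => t ij.2 \o s ij.1).
have actY_comp ij p : actY alpha (h ij.2 * g ij.1)%g (t ij.2 \o s ij.1) p =
    actY alpha (h ij.2) (t ij.2) (phi ij.1 p) by rewrite /actY /= actM.
split.
- move=> [i j].
  rewrite (_ : _ `&` _ = (A `&` c @^-1` [set i]) `&`
     (phi i @^-1` (B `&` d @^-1` [set j]))).
    exact/(clopenI (cP i))/preimage_clopen/(@actY_continuous _ _).
  apply/seteqP; split => [p [Ap [<- <-]]|p [[Ap ci] [_ dj]]].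
    by split => //; split => //; exact: AB.
  by split => //=; rewrite ci dj.
- by move=> [i j]; exact: bij_comp.
- move=> p q Ap Aq; rewrite !actY_comp /= => eq_pq.
  by apply: inj => //; apply: inj' => //; exact: AB.
- by move=> p Ap; rewrite actY_comp; apply: BC; exact: AB.
Qed.

Lemma embedsU A1 A2 B1 B2 : A1 `&` A2 = set0 -> B1 `&` B2 = set0 ->
  embeds A1 B1 -> embeds A2 B2 -> embeds (A1 `|` A2) (B1 `|` B2).
Proof.
move=> A12 B12 [I [c [g [s [cP s_bij inj AB]]]]] [J [d [h [t [cQ t_bij inj' AB']]]]].
pose e p : I + J := if pselect (A1 p) then inl (c p) else inr (d p).
pose ge k := match k with inl i => g i | inr j => h j end.
pose se k := match k with inl i => s i | inr j => t j end.
have eA1 p : A1 p -> e p = inl (c p) by rewrite /e; case: pselect.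
have eA2 p : A2 p -> e p = inr (d p).
  move=> A2p; rewrite /e; case: pselect => // A1p.
  by have : (A1 `&` A2) p by []; rewrite A12.
have B12P y : B1 y -> B2 y -> False.
  by move=> B1y B2y; have : (B1 `&` B2) y by []; rewrite B12.
exists (I + J)%type, e, ge, se; split.
- case=> [i|j].
  + rewrite (_ : _ `&` _ = A1 `&` c @^-1` [set i]) //.
    apply/seteqP; split => [p [[A1p|A2p]]|p [A1p <-]].
    * by rewrite /= eA1 // => -[<-].
    * by rewrite /= eA2.
    * by split; [left|rewrite /= eA1].
  + rewrite (_ : _ `&` _ = A2 `&` d @^-1` [set j]) //.
    apply/seteqP; split => [p [[A1p|A2p]]|p [A2p <-]].
    * by rewrite /= eA1.
    * by rewrite /= eA2 // => -[<-].
    * by split; [right|rewrite /= eA2].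
- by case.
- move=> p q [A1p|A2p] [A1q|A2q].
  + by rewrite (eA1 p) // (eA1 q) //=; exact: inj.
  + rewrite (eA1 p) // (eA2 q) //= => eq_pq.
    by case: (B12P _ (AB p A1p)); rewrite eq_pq; exact: AB'.
  + rewrite (eA2 p) // (eA1 q) //= => eq_pq.
    by case: (B12P _ (AB q A1q)); rewrite -eq_pq; exact: AB'.
  + by rewrite (eA2 p) // (eA2 q) //=; exact: inj'.
- move=> p [A1p|A2p]; first by rewrite eA1 //=; left; exact: AB.
  by rewrite eA2 //=; right; exact: AB'.
Qed.

Lemma embeds_orbit A B x n : embeds A B -> A (x, n) ->
  exists g m, B (alpha g x, m).
Proof.
move=> [I [c [g [s [_ _ _ AB]]]]] /AB.
by exists (g (c (x, n))), (s (c (x, n)) n).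
Qed.

Lemma embeds_subsingleton A B : embeds A B ->
  (forall p q, B p -> B q -> p = q) -> forall p q, A p -> A q -> p = q.
Proof.
move=> [I [c [g [s [_ _ inj AB]]]]] B_sub p q Ap Aq.
by apply: inj => //; apply: B_sub; exact: AB.
Qed.

Lemma minimal_of_embeds : zero_dim X ->
  (forall D, clopen D -> D !=set0 ->
     embeds ([set: X] `*` [set 0%N]) (D `*` [set 0%N])) ->
  minimal_action alpha.
Proof.
move=> zd embedT x; apply/seteqP; split => // z _ W.
rewrite nbhsE => -[U [oU Uz] UW].
have [V [cV Vz VU]] := zd U z oU Uz.
have x0_T : ([set: X] `*` [set 0%N]) (x, 0%N) by [].
have [g [m [Vgx _]]] := embeds_orbit (embedT V cV (ex_intro _ z Vz)) x0_T.
by exists (alpha g x); split; [exists g | exact/UW/VU].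
Qed.

Lemma equidec_embeds A B : equidec alpha A B -> embeds A B.
Proof.
move=> [n [P [g [s [cP s_bij [AP P_triv] [BP gP_triv]]]]]].
pose c p : option 'I_n :=
  if pselect (exists i, P i p) is left h then Some (projT1 (cid h)) else None.
have cP_some i p : P i p -> c p = Some i.
  move=> Pip; rewrite /c; case: pselect => [h|]; last by case; exists i.
  by case: (cid h) => j /= Pjp; congr Some; apply: P_triv => //; exists p.
have AP_ex p : A p -> exists i, P i p by rewrite AP => -[i _ Pi]; exists i.
pose ge o := if o is Some i then g i else 1%g.
pose se o := if o is Some i then s i else id.
exists (option 'I_n), c, ge, se; split.
- case=> [i|].
    rewrite (_ : _ `&` _ = P i) //; apply/seteqP; split => [p [/AP_ex [j Pj]]|p Pi].
      by rewrite /= (cP_some _ _ Pj) => -[<-].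
    by split; [rewrite AP; exists i|exact: cP_some].
  rewrite (_ : _ `&` _ = set0); first exact: clopen0.
  by apply/seteqP; split => // p [/AP_ex [j Pj]]; rewrite /= (cP_some _ _ Pj).
- by case=> [i|] /=; [exact: s_bij | exists id].
- move=> p q /AP_ex [i Pi] /AP_ex [j Pj]; rewrite (cP_some _ _ Pi) (cP_some _ _ Pj) /=.
  move=> eq_pq; have ij : i = j.
    apply: gP_triv => //; exists (actY alpha (g i) (s i) p).
    by split; [exists p | exists q].
  by subst j; move: eq_pq; apply: actY_inj; exact: bij_inj.
- by move=> p /AP_ex [i Pi]; rewrite (cP_some _ _ Pi) BP; exists i => //; exists p.
Qed.

Lemma Tle_embeds A B : T_le alpha A B -> embeds A B.
Proof.
move=> [A' [C' [[cA' _] _ _ AA' A'C'B]]].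
apply: embeds_trans (equidec_embeds AA') _.
exact: embedsSl (@subsetUl _ A' C') cA' (equidec_embeds A'C'B).
Qed.

Lemma equidec_refl B : clopen B -> equidec alpha B B.
Proof.
have ord1_triv (P : 'I_1 -> set (X * nat)) : trivIset setT P.
  by move=> i j _ _ _; rewrite (ord1 i) (ord1 j).
have I1 : [set: 'I_1] !=set0 by exists ord0.
move=> cB; exists 1%N, (fun=> B), (fun=> 1%g), (fun=> id); split => //.
- by move=> _; exists id.
- by rewrite bigcup_const.
- split => //; rewrite bigcup_const //.
  apply/seteqP; split => [[x n] Bxn|_ [[x n] Bxn <-]]; last by rewrite /actY act1.
  by exists (x, n); rewrite /actY ?act1.
Qed.

Lemma embeds_equidec_subset A B : embeds A B ->
  exists B0, [/\ B0 `<=` B, clopen B0 & equidec alpha A B0].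
Proof.
move=> [I [c [g [s [cP s_bij inj AB]]]]].
pose P (k : 'I_#|I|) := A `&` c @^-1` [set enum_val k].
pose f (k : 'I_#|I|) := actY alpha (g (enum_val k)) (s (enum_val k)).
have cfP k : clopen (f k @` P k) by exact: clopen_actY_image (s_bij _) (cP _).
exists (\bigcup_k f k @` P k); split.
- by move=> _ [k _ [p [Ap /= ck] <-]]; rewrite /f -ck; exact: AB.
- split; first by apply: bigcup_open => k _; case: (cfP k).
  by apply: closed_bigcup; [exact: finite_finset | move=> k _; case: (cfP k)].
exists #|I|, P, (fun k => g (enum_val k)), (fun k => s (enum_val k)); split.
- by move=> k; exact: cP.
- by move=> k; exact: s_bij.
- split.
    apply/seteqP; split => [p Ap|p [k _ []//]].
    by exists (enum_rank (c p)) => //; split => //=; rewrite enum_rankK.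
  move=> i j _ _ [p [[_ /= ci] [_ /= cj]]].
  by apply: enum_val_inj; rewrite -ci -cj.
- split => // i j _ _ [_ [[p [Ap /= ci] <-] [q [Aq /= cj] eq_pq]]].
  by apply: enum_val_inj; rewrite -ci -cj; congr c; apply: inj => //; rewrite ci cj.
Qed.

Lemma embeds_Tle A B : bclopen B -> embeds A B -> T_le alpha A B.
Proof.
move=> [cB [N bN]] /embeds_equidec_subset [B0 [B0B cB0 AB0]].
exists B0, (B `\` B0); split.
- by split => //; exists N => x n /B0B /bN.
- split; first by rewrite setDE; apply: clopenI => //; exact: clopenC.
  by exists N => x n [/bN].
- exact: setDIK.
- exact: AB0.
- by rewrite setDUK //; exact: equidec_refl.
Qed.

Lemma equidec_set0 A : equidec alpha A set0 -> A = set0.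
Proof.
move=> [n [P [g [s [_ _ [-> _] [P0 _]]]]]].
apply/seteqP; split => // p [i _ Pip].
suff : (set0 : set (X * nat)) (actY alpha (g i) (s i) p) by [].
by rewrite P0; exists i => //; exists p.
Qed.

End Action.

Section PointSpace.
Variables (G : groupType) (X : topologicalType) (alpha : G -> X -> X) (x0 : X).
Hypothesis X_point : forall x : X, x = x0.

Local Open Scope ereal_scope.

Definition point_mass (E : set X) : \bar Rdefinitions.R := if `[< E x0 >] then 1 else 0.

Lemma point_set_cases (E : set X) : E = set0 \/ E = [set: X].
Proof.
have [Ex0|nEx0] := pselect (E x0); [right|left]; apply/seteqP; split => // x;
  by rewrite (X_point x).
Qed.

Lemma point_mass_le (E U : set X) : (E x0 -> U x0) -> point_mass E <= point_mass U.
Proof.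
rewrite /point_mass => EU; case: (asboolP (E x0)) => [/EU|_]; first by case: asboolP.
by case: asboolP; rewrite ?lee01.
Qed.

Lemma point_mass_partial_sum (F : nat -> set X) : trivIset setT F -> forall n,
  \sum_(0 <= i < n) point_mass (F i) =
    if `[< exists2 i, (i < n)%N & F i x0 >] then 1 else 0.
Proof.
move=> F_triv; elim=> [|n IH]; first by rewrite big_geq //; case: asboolP => // -[].
rewrite big_nat_recr //= IH /point_mass.
case: asboolP => [[i ilt Fi]|nF]; case: asboolP => [Fn|nFn].
- have in_eq : i = n by apply: F_triv => //; exists x0.
  by move: ilt; rewrite in_eq ltnn.
- by rewrite adde0; case: asboolP => // -[]; exists i => //; exact: ltnW.
- by rewrite add0e; case: asboolP => // -[]; exists n.
- rewrite adde0; case: asboolP => // -[i]; rewrite ltnS leq_eqVlt.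
  by case/orP => [/eqP ->//|ilt Fi]; case: nF; exists i.
Qed.

Lemma point_mass_radon : radon_probability point_mass.
Proof.
have openE (E : set X) : open E.
  by case: (point_set_cases E) => ->; [exact: open0 | exact: openT].
have compactE (E : set X) : compact E.
  case: (point_set_cases E) => ->; first exact: compact0.
  rewrite (_ : setT = [set x0]); first exact: compact_set1.
  by apply/seteqP; split => // x _; exact: X_point.
split.
- by split => [|E _]; rewrite /point_mass; case: asboolP.
- move=> F _ F_triv; under eq_fun do rewrite point_mass_partial_sum //.
  apply: cvg_near_cst.
  have [[i0 _ Fi0]|nF] := pselect ((\bigcup_n F n) x0).
    exists i0.+1 => // n /= i0n.
    have Fi0n : exists2 i, (i < n)%N & F i x0 by exists i0 => //; exact: i0n.
    have F_x0 : (\bigcup_n F n) x0 by exists i0.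
    by rewrite /point_mass (asboolT Fi0n) (asboolT F_x0).
  apply: nearW => n; rewrite /point_mass (asboolF nF) asboolF // => -[i _ Fi].
  by apply: nF; exists i.
- by rewrite /point_mass asboolT.
- move=> E _; apply/le_anti/andP; split.
    by apply/ereal_infP => _ [U [_ EU] <-]; apply: point_mass_le; exact: EU.
  by apply: ereal_inf_lbound; exists E => //; split; [exact: openE|].
- move=> U _; apply/le_anti/andP; split.
    by apply: ereal_sup_ubound; exists U => //; split; [exact: compactE|].
  by apply/ereal_supP => _ [K [_ KU] <-]; apply: point_mass_le; exact: KU.
Qed.

Lemma point_mass_invariant : invariant_measure alpha point_mass.
Proof.
move=> g E _; rewrite /point_mass.
case: (point_set_cases E) => ->; first by rewrite image_set0.
have x0_image : (alpha g @` [set: X]) x0 by exists x0 => //; exact: X_point.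
by rewrite (asboolT x0_image) asboolT.
Qed.

End PointSpace.

Section BoundedEmbeds.
Variables (G : groupType) (X : topologicalType) (alpha : G -> X -> X).
Hypotheses (act : is_continuous_action alpha) (zdX : zero_dimensional X).
Hypothesis X_nonpoint : forall x0 : X, ~ (forall x : X, x = x0).
Hypothesis embedT : forall D, clopen D -> D !=set0 ->
  embeds alpha ([set: X] `*` [set 0%N]) (D `*` [set 0%N]).

Lemma clopen_split_nonempty (D : set X) : clopen D -> D !=set0 ->
  exists E, [/\ clopen E, E `<=` D, E !=set0 & D `\` E !=set0].
Proof.
move=> cD [d Dd].
suff [d' Dd' d'd] : exists2 d', D d' & d' != d by exact: clopen_split cD Dd' Dd d'd.
apply: contrapT => D_point; apply: (@X_nonpoint d) => x.
have D0_sub : forall p q, (D `*` [set 0%N]) p -> (D `*` [set 0%N]) q -> p = q.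
  suff D_eq y : D y -> y = d.
    by move=> [y n] [y' n'] [/D_eq /= -> /= ->] [/D_eq /= -> /= ->].
  by move=> Dy; apply: contrapT => /eqP yd; apply: D_point; exists y.
have := embeds_subsingleton (embedT cD (ex_intro _ d Dd)) D0_sub.
by move=> /(_ (x, 0%N) (d, 0%N) (conj I erefl) (conj I erefl)) [].
Qed.

Lemma embeds_level k (D : set X) m : clopen D -> D !=set0 ->
  embeds alpha ([set: X] `*` [set k]) (D `*` [set m]).
Proof.
move=> cD D0; have X_D := embedT cD D0.
exact: (embeds_trans act (embeds_trans act (embeds_swap act k 0 (@clopenT X)) X_D)
  (embeds_swap act 0 m cD)).
Qed.

Lemma bounded_embeds N A : clopen A -> (forall x n, A (x, n) -> (n < N)%N) ->
  forall (D : set X) m, clopen D -> D !=set0 -> embeds alpha A (D `*` [set m]).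
Proof.
elim: N A => [|N IH] A cA bA D m cD D0.
  rewrite (_ : A = set0); first exact: embeds0.
  by apply/seteqP; split => // -[x n] /bA.
have [E [cE ED E0 DE0]] := clopen_split_nonempty cD D0.
pose A_low := A `&` [set p | (p.2 < N)%N].
pose A_top := A `&` ([set: X] `*` [set N]).
have A_split : A = A_low `|` A_top.
  apply/seteqP; split => [[x n] Axn|p [[]//|[]//]].
  have := bA _ _ Axn; rewrite ltnS leq_eqVlt => /orP [/eqP nN|nN]; last by left.
  by right; split => //; split => //; rewrite nN.
have cA_low : clopen A_low.
  exact: clopenI cA (clopen_snd_preimage X [set n | (n < N)%N]).
have cDE : clopen (D `\` E) by rewrite setDE; exact: clopenI cD (clopenC _ cE).
have low_E : embeds alpha A_low (E `*` [set m]) by apply: IH => // x n [].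
have top_DE : embeds alpha A_top ((D `\` E) `*` [set m]).
  apply: embedsSl (@subIsetr _ A _) _ (embeds_level N m cDE DE0).
  exact: clopenI cA (clopen_setX1 N (@clopenT X)).
have low_top0 : A_low `&` A_top = set0.
  by apply/seteqP; split => // -[x n] [[_ /= nN] [_ [_ /= nE]]]; rewrite nE ltnn in nN.
have E_DE0 : E `*` [set m] `&` (D `\` E) `*` [set m] = set0.
  by apply/seteqP; split => // -[x n] [[/= Ex _] [[] /=]].
rewrite A_split; apply: embedsSr _ (embedsU low_top0 E_DE0 low_E top_DE).
by move=> [x n] [] [/= Dx ->]; split => //; [exact: ED | case: Dx].
Qed.

Lemma Tle_nonzero A B : bclopen A -> bclopen B -> ~ equidec alpha B set0 ->
  T_le alpha A B.
Proof.
move=> [cA [N bA]] [cB bB] B_nonzero.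
have [[b m] Bbm] : B !=set0.
  apply/set0P/eqP => B0; apply: B_nonzero; rewrite B0.
  exact: (equidec_refl act clopen0).
apply: (embeds_Tle act (conj cB bB)).
have slice_m0 : [set x | B (x, m)] !=set0 by exists b.
apply: (embedsSr _ (bounded_embeds cA bA m (clopen_slice m cB) slice_m0)).
by move=> [x n] [/= Bxm ->].
Qed.

End BoundedEmbeds.

Theorem lemmal (G : groupType) (X : topologicalType) (alpha : G -> X -> X) :
  countable [set: G] ->
  is_continuous_action alpha ->
  compact [set: X] -> hausdorff_space X -> zero_dim X ->
  ~ (exists mu, radon_probability mu /\ invariant_measure alpha mu) ->
  (dynamical_comparison alpha <->
   (minimal_action alpha /\
    forall A B : set (X * nat), bclopen A -> bclopen B ->
      ~ equidec alpha A set0 -> ~ equidec alpha B set0 ->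
      T_le alpha A B)).
Proof.
move=> _ act _ hX zd no_mu.
split => [DC|[_ Tle_all] A B cA cB [a Aa] [b Bb] _]; last first.
  have at0_nonzero (S : set X) s : S s -> ~ equidec alpha (at0 S) set0.
    by move=> Ss /equidec_set0 S0; have : at0 S (s, 0%N) by []; rewrite S0.
  apply: Tle_all; try exact: bclopen_at0.
    exact: (at0_nonzero _ a).
  exact: (at0_nonzero _ b).
have X_nonpoint x0 : ~ (forall x : X, x = x0).
  move=> X_point; apply: no_mu; exists (point_mass x0).
  by split; [exact: point_mass_radon | exact: point_mass_invariant].
have embedT D : clopen D -> D !=set0 ->
    embeds alpha ([set: X] `*` [set 0%N]) (D `*` [set 0%N]).
  move=> cD [d Dd]; apply: (Tle_embeds act); apply: DC => //; try by exists d.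
    exact: clopenT.
  by move=> mu mu_radon mu_inv; case: no_mu; exists mu.
split; first exact: minimal_of_embeds.
move=> A B bA bB _.
exact: (Tle_nonzero act (zero_dim_separates zd hX) X_nonpoint embedT bA bB).
Qed.
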